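(* Let $n>1$ be an integer and let $k$ be an odd positive integer with $k<2^n$. Then there exist signs $\epsilon_1,\dots,\epsilon_{n-2}\in\{+1,-1\}$ (depending on $k$) such that $$\sin\Big(\frac{k\pi}{2^n}\Big)=\frac12\sqrt{2+\epsilon_1\sqrt{2+\epsilon_2\sqrt{2+\cdots+\epsilon_{n-2}\sqrt{2}}}},$$ where the square root sign appears $n-1$ times in total (for $n=2$ the right-hand side is $\frac12\sqrt2$). *)

From Stdlib Require Import Reals List Arith.
Open Scope R_scope.

(* nested_radical [e1; ...; em] = sqrt(2 + e1 * sqrt(2 + e2 * ... sqrt(2 + em * sqrt 2)))
   It contains exactly (m+1) square roots; nested_radical [] = sqrt 2. *)
Fixpoint nested_radical (eps : list R) : R :=
  match eps with
  | nil => sqrt 2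
  | e :: l => sqrt (2 + e * nested_radical l)
  end.

(** The half-angle formulas give [(2 cos (x/2))^2 = 2 + 2 cos x] and
    [(2 sin (x/2))^2 = 2 - 2 cos x].  Starting from [cos (k PI / 2) = 0] for odd [k],
    repeated halving shows that [2 cos (k PI / 2^(j+2))] is, up to sign, a nested
    radical with [j + 1] square roots.  One more halving, now with the sine, adds the
    outermost root; its sign is [+] because [0 < k PI / 2^n < PI]. *)

From Stdlib Require Import Reals List Arith Lra Lia.
Open Scope R_scope.

Lemma eq_sign_mul_sqrt_sqr (y : R) :
  exists s, (s = 1 \/ s = -1) /\ y = s * sqrt (y * y).
Proof.
  change (y * y) with (Rsqr y); rewrite sqrt_Rsqr_abs; unfold Rabs.
  destruct (Rcase_abs y); [exists (-1) | exists 1]; split; auto; lra.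
Qed.

Lemma two_cos_half (x : R) :
  exists s, (s = 1 \/ s = -1) /\ 2 * cos (x / 2) = s * sqrt (2 + 2 * cos x).
Proof.
  replace (2 + 2 * cos x) with (2 * cos (x / 2) * (2 * cos (x / 2))).
  - apply eq_sign_mul_sqrt_sqr.
  - replace x with (2 * (x / 2)) at 3 by field.
    rewrite cos_2a_cos; ring.
Qed.

Lemma two_sin_half (x : R) :
  0 <= sin (x / 2) -> 2 * sin (x / 2) = sqrt (2 - 2 * cos x).
Proof.
  intros Hs.
  replace x with (2 * (x / 2)) at 2 by field.
  rewrite cos_2a_sin, <- (sqrt_square (2 * sin (x / 2)) ltac:(lra)) at 1.
  f_equal; ring.
Qed.

Lemma div_pow2_S (x : R) (j : nat) : x / 2 ^ S j = x / 2 ^ j / 2.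
Proof.
  assert (2 ^ j <> 0) by (apply pow_nonzero; lra).
  simpl; field; auto.
Qed.

Lemma cos_odd_mult_PI_half (k : nat) : Nat.Odd k -> cos (INR k * PI / 2) = 0.
Proof.
  intros [m ->]. apply cos_eq_0_1. exists (Z.of_nat m).
  rewrite <- INR_IZR_INZ, plus_INR, mult_INR; simpl; field.
Qed.

Lemma sin_mult_PI_div_pow2_pos (n k : nat) :
  (0 < k)%nat -> (k < 2 ^ n)%nat -> 0 < sin (INR k * PI / 2 ^ n).
Proof.
  intros Hk Hkn.
  assert (Hp : 0 < 2 ^ n) by (apply pow_lt; lra).
  apply lt_INR in Hk, Hkn. rewrite pow_INR in Hkn. change (INR 2) with 2 in Hkn.
  pose proof PI_RGT_0.
  apply sin_gt_0.
  - apply Rdiv_lt_0_compat; [apply Rmult_lt_0_compat|]; auto.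
  - apply Rmult_lt_reg_r with (2 ^ n); auto.
    unfold Rdiv. rewrite Rmult_assoc, Rinv_l by lra. nra.
Qed.

Lemma two_cos_odd_mult_PI_div_pow2 (j k : nat) : Nat.Odd k ->
  exists s eps, (s = 1 \/ s = -1) /\ length eps = j /\
    Forall (fun e => e = 1 \/ e = -1) eps /\
    2 * cos (INR k * PI / 2 ^ S (S j)) = s * nested_radical eps.
Proof.
  intros Hk. induction j as [|j IH].
  - destruct (two_cos_half (INR k * PI / 2)) as [s [Hs Hc]].
    exists s, nil. repeat split; auto.
    rewrite div_pow2_S, pow_1, Hc, cos_odd_mult_PI_half by exact Hk.
    simpl; f_equal; f_equal; ring.
  - destruct IH as [s [eps [Hs [Hl [Hf Hc]]]]].
    destruct (two_cos_half (INR k * PI / 2 ^ S (S j))) as [s' [Hs' Hc']].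
    exists s', (s :: eps).
    rewrite div_pow2_S, Hc', Hc. repeat split; simpl; auto.
Qed.

Theorem lemma3p3 (n k : nat) (hn : (1 < n)%nat) (hk : Nat.Odd k) (hkn : (k < 2 ^ n)%nat) :
  exists eps : list R,
    length eps = (n - 2)%nat /\
    Forall (fun e => e = 1 \/ e = -1) eps /\
    sin (INR k * PI / 2 ^ n) = / 2 * nested_radical eps.
Proof.
  assert (Hpos : 0 < sin (INR k * PI / 2 ^ n)).
  { apply sin_mult_PI_div_pow2_pos; auto. destruct hk; lia. }
  destruct n as [|[|m]]; [lia | lia |].
  rewrite div_pow2_S in Hpos |- *.
  assert (Hsin := two_sin_half _ (Rlt_le _ _ Hpos)).
  enough (exists eps, length eps = m /\ Forall (fun e => e = 1 \/ e = -1) eps /\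
            sqrt (2 - 2 * cos (INR k * PI / 2 ^ S m)) = nested_radical eps)
    as [eps [Hl [Hf He]]].
  { exists eps. rewrite Nat.sub_succ, Nat.sub_succ, Nat.sub_0_r.
    repeat split; auto. rewrite <- He, <- Hsin. field. }
  destruct m as [|j].
  - exists nil. repeat split; auto.
    rewrite pow_1, cos_odd_mult_PI_half by exact hk.
    simpl; f_equal; ring.
  - destruct (two_cos_odd_mult_PI_div_pow2 j k hk) as [s [eps [Hs [Hl [Hf Hc]]]]].
    exists (- s :: eps). rewrite Hc. repeat split; simpl; auto.
    + constructor; auto. lra.
    + f_equal. ring.
Qed.
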